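(* Let $\nu\in\mathcal P_{2,0}(\mathbb R^d)$ and let $\mathcal D\subset\mathcal P_2(\mathbb R^d)$ be a cone. For every $\mu^*\in\operatorname{argmax}_{\mu\in\mathcal D\cap\mathcal M^K_\nu}\operatorname{Var}(\mu)$ and every $\pi^*\in\operatorname{argmax}_{\pi\in\Pi(\mu^*,\nu)}\int\langle x,y\rangle\,d\pi(x,y)$, $$\int\langle x,y\rangle\,d\pi^*(x,y)=\int|x|^2\,d\mu^*(x).$$ If in addition $\mathcal D$ is translation invariant, then every such $\mu^*$ satisfies $\int x\,d\mu^*(x)=0$.
   Context: $\mathcal P_2(\mathbb R^d)$: Borel probability measures with finite second moment; $\mathcal P_{2,0}$: those with zero mean. $\Pi(\mu,\nu)$: couplings. $\operatorname{Var}(\mu)=\int|x-\int z\,d\mu|^2d\mu$. Kantorovich dominance: $\mu\preceq_K\nu$ iff there is $\pi\in\Pi(\mu,\nu)$ with $\int\langle x-b_\nu,y-x\rangle\,d\pi=0$, $b_\nu=\int y\,d\nu$; $\mathcal M^K_\nu=\{\mu\in\mathcal P_2(\mathbb R^d):\mu\preceq_K\nu\}$. The dilation $\lambda_\#\mu$ is the law of $\lambda X$, $X\sim\mu$. $\mathcal D$ is a cone if $\lambda_\#\mu\in\mathcal D$ for all $\mu\in\mathcal D$, $\lambda\ge0$; translation invariant if $(T_k)_\#\mu\in\mathcal D$ for all $\mu\in\mathcal D$, $k\in\mathbb R^d$, where $T_k(x)=x+k$. *)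

(* R^d is modelled as [n.-tuple R] with its
   canonical product (= Borel) sigma-algebra from measurable_structure.v. *)
From HB Require Import structures.
From mathcomp Require Import all_boot all_order all_algebra.
From mathcomp Require Import all_classical all_reals all_analysis.
Set Implicit Arguments. Unset Strict Implicit. Unset Printing Implicit Defensive.
Import Order.TTheory GRing.Theory Num.Theory.
Local Open Scope classical_set_scope.
Local Open Scope ring_scope.

Section defs.
Context {R : realType} {n : nat}.

Notation Rd := (n.-tuple R).

Definition dotv (x y : Rd) : R := \sum_(i < n) tnth x i * tnth y i.
Definition sqnorm (x : Rd) : R := dotv x x.

Definition P2 (mu : probability Rd R) : Prop :=
  (\int[mu]_x (sqnorm x)%:E < +oo)%E.

Definition mean (mu : probability Rd R) : Rd :=
  [tuple fine (\int[mu]_x (tnth x i)%:E) | i < n].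

Definition Var (mu : probability Rd R) : \bar R :=
  (\int[mu]_x (\sum_(i < n) (tnth x i - tnth (mean mu) i) ^+ 2)%:E)%E.

Definition coupling (mu nu : probability Rd R)
    (pi : probability (Rd * Rd)%type R) : Prop :=
  (forall A : set Rd, measurable A -> pi (fst @^-1` A) = mu A) /\
  (forall A : set Rd, measurable A -> pi (snd @^-1` A) = nu A).

Definition corr (pi : probability (Rd * Rd)%type R) : \bar R :=
  (\int[pi]_z (dotv z.1 z.2)%:E)%E.

Definition Kdom (mu nu : probability Rd R) : Prop :=
  exists pi, coupling mu nu pi /\
    (\int[pi]_z (\sum_(i < n) (tnth z.1 i - tnth (mean nu) i)
                              * (tnth z.2 i - tnth z.1 i))%:E = 0)%E.

Definition MK (nu : probability Rd R) : set (probability Rd R) :=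
  [set mu | P2 mu /\ Kdom mu nu].

Definition is_image (f : Rd -> Rd) (mu mu' : probability Rd R) : Prop :=
  forall A : set Rd, measurable A -> mu' A = mu (f @^-1` A).

Definition dilate (l : R) (x : Rd) : Rd := [tuple l * tnth x i | i < n].
Definition translate (k x : Rd) : Rd := [tuple tnth x i + tnth k i | i < n].

Definition is_cone (D : set (probability Rd R)) : Prop :=
  forall mu mu' l, D mu -> 0 <= l -> is_image (dilate l) mu mu' -> D mu'.

Definition transl_inv (D : set (probability Rd R)) : Prop :=
  forall mu mu' k, D mu -> is_image (translate k) mu mu' -> D mu'.

End defs.

(* Dilating mu by l >= 0 and pairing it with nu through (x, y) |-> (l x, y)
   multiplies the second moment by l^2, the correlation \int <x, y> by l and
   the variance by l^2.  Hence if some coupling pi of mu and nu has correlation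
   l * \int |x|^2 dmu, the dilate is again Kantorovich-dominated by nu.  For a
   variance maximiser mu*, a coupling with correlation c > \int |x|^2 dmu*
   would produce such a dilate with l > 1, forcing Var mu* = 0; but then mu* is
   a Dirac mass and every coupling has correlation <b_mu*, b_nu> = 0.  So no
   coupling beats the coupling witnessing mu* <=_K nu, whose correlation is
   \int |x|^2 dmu*.  Under translation invariance, centring mu* keeps its
   variance and, nu being centred, the correlation of the witnessing coupling,
   but lowers the second moment by |b_mu*|^2; the same bound forces b_mu* = 0. *)

From HB Require Import structures.
From mathcomp Require Import all_boot all_order all_algebra.
From mathcomp Require Import all_classical all_reals all_analysis.
From mathcomp Require Import measurable_realfun ring lra.
Set Implicit Arguments. Unset Strict Implicit. Unset Printing Implicit Defensive.
Import Order.TTheory GRing.Theory Num.Theory.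
Local Open Scope classical_set_scope.
Local Open Scope ring_scope.

Notation Rintegrable mu f := (integrable mu setT (EFin \o f)).

Section Rintegral_facts.
Context d (T : measurableType d) (R : realType).
Variable mu : {measure set T -> \bar R}.
Implicit Types f g : T -> R.

Lemma RintegralE f : Rintegrable mu f ->
  (\int[mu]_x (f x)%:E)%E = (\int[mu]_x f x)%:E.
Proof. by move=> intf; rewrite fineK //; exact: integrable_fin_num. Qed.

Lemma RintegrableD f g : Rintegrable mu f -> Rintegrable mu g ->
  Rintegrable mu (fun x => f x + g x).
Proof. by move=> intf intg; apply: eq_integrable (integrableD _ intf intg). Qed.

Lemma RintegrableZl (a : R) f : Rintegrable mu f ->
  Rintegrable mu (fun x => a * f x).
Proof. by move=> intf; apply: eq_integrable (integrableZl _ a intf). Qed.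

Lemma RintegrableB f g : Rintegrable mu f -> Rintegrable mu g ->
  Rintegrable mu (fun x => f x - g x).
Proof. by move=> intf intg; apply: eq_integrable (integrableB _ intf intg). Qed.

Lemma Rintegrable_sum (I : Type) (r : seq I) (F : I -> T -> R) :
  (forall i, Rintegrable mu (F i)) ->
  Rintegrable mu (fun x => \sum_(i <- r) F i x).
Proof.
move=> intF.
apply: eq_integrable (integrable_sum measurableT r (fun i _ => intF i)) => //.
by move=> x _ /=; rewrite sumEFin.
Qed.

Lemma Rintegral_sum (I : Type) (r : seq I) (F : I -> T -> R) :
  (forall i, Rintegrable mu (F i)) ->
  \int[mu]_x (\sum_(i <- r) F i x) = \sum_(i <- r) \int[mu]_x F i x.
Proof.
move=> intF; elim: r => [|i r IH].
  by under eq_Rintegral do rewrite big_nil; rewrite Rintegral_cst // mul0r big_nil.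
under eq_Rintegral do rewrite big_cons.
by rewrite RintegralD //; [rewrite IH big_cons | exact: Rintegrable_sum].
Qed.

Lemma le_Rintegrable f g : measurable_fun setT f ->
  (forall x, `|f x| <= g x) -> Rintegrable mu g -> Rintegrable mu f.
Proof.
move=> mf fg intg; apply: le_integrable intg => //; first exact/measurable_EFinP.
by move=> x _ /=; rewrite lee_fin (le_trans (fg x)) // ler_norm.
Qed.

Lemma ge0_Rintegrable f : measurable_fun setT f -> (forall x, 0 <= f x) ->
  (\int[mu]_x (f x)%:E < +oo)%E -> Rintegrable mu f.
Proof.
move=> mf f0 fint; apply/integrableP; split; first exact/measurable_EFinP.
by under eq_integral do rewrite /= ger0_norm //.
Qed.

End Rintegral_facts.

Lemma Rintegral_cst_probability d (T : measurableType d) (R : realType)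
  (P : probability T R) (c : R) : \int[P]_x c = c.
Proof. by rewrite Rintegral_cst // /= probability_setT mulr1. Qed.

Section transfer.
Context d d' (T : measurableType d) (T' : measurableType d') (R : realType).
Variables (mu : {measure set T -> \bar R}) (mu' : {measure set T' -> \bar R}).
Variable phi : T -> T'.
Hypotheses (mphi : measurable_fun setT phi)
  (mu'E : forall A, measurable A -> mu' A = mu (phi @^-1` A)).

Let integral_transfer (h : T' -> \bar R) :
  (\int[mu']_y h y = \int[pushforward mu phi]_y h y)%E.
Proof. by apply: eq_measure_integral => A mA _; rewrite mu'E. Qed.

Lemma Rintegrable_transfer g : measurable_fun setT g ->
  Rintegrable mu' g <-> Rintegrable mu (g \o phi).
Proof.
move=> mg; have mEg : measurable_fun setT (EFin \o g) by exact/measurable_EFinP.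
have mabs : measurable_fun setT (fun y => `|(g y)%:E|%E) by exact: measurableT_comp.
have abs_transfer : (\int[mu']_y `|(g y)%:E| = \int[mu]_x `|(g (phi x))%:E|)%E.
  by rewrite integral_transfer ge0_integral_pushforward // preimage_setT.
split => /integrableP [_ gint]; apply/integrableP; split.
- exact: measurableT_comp mEg mphi.
- by rewrite -abs_transfer.
- exact: mEg.
- by rewrite abs_transfer.
Qed.

Lemma Rintegral_transfer g : measurable_fun setT g ->
  Rintegrable mu (g \o phi) -> \int[mu']_y g y = \int[mu]_x g (phi x).
Proof.
move=> mg intg; rewrite /Rintegral integral_transfer integral_pushforward //.
exact/measurable_EFinP.
Qed.

End transfer.

Lemma bounded_linear_eq0 (R : realFieldType) (c M : R) :
  (forall t, t * c <= M) -> c = 0.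
Proof.
move=> le_cM; apply/eqP/contraT => c_neq0.
by have := le_cM ((M + 1) / c); rewrite divfK // gerDl ler10.
Qed.

Section euclidean.
Context {R : realType} {n : nat}.
Notation Rd := (n.-tuple R).
Implicit Types (b x y z k : Rd) (t l : R).

Lemma sqnormE x : sqnorm x = \sum_(i < n) tnth x i ^+ 2.
Proof. by apply: eq_bigr => i _; rewrite expr2. Qed.

Lemma sqnorm_ge0 x : 0 <= sqnorm x.
Proof. by rewrite sqnormE; apply: sumr_ge0 => i _; exact: sqr_ge0. Qed.

Lemma sqr_tnth_le_sqnorm x i : tnth x i ^+ 2 <= sqnorm x.
Proof.
by rewrite sqnormE (bigD1 i) //= lerDl; apply: sumr_ge0 => j _; exact: sqr_ge0.
Qed.

Lemma sqnorm_eq0 x : sqnorm x = 0 -> x = [tuple 0 | _ < n].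
Proof.
rewrite sqnormE => /psumr_eq0P x0; apply: eq_from_tnth => i.
by apply/eqP; rewrite tnth_mktuple -sqrf_eq0 x0 // => j _; exact: sqr_ge0.
Qed.

Lemma dotv0r x : dotv x [tuple 0 | _ < n] = 0.
Proof. by apply: big1 => i _; rewrite tnth_mktuple mulr0. Qed.

Lemma dotv0l x : dotv [tuple 0 | _ < n] x = 0.
Proof. by apply: big1 => i _; rewrite tnth_mktuple mul0r. Qed.

Lemma normr_dotv_le x y : `|dotv x y| <= sqnorm x + sqnorm y.
Proof.
rewrite !sqnormE -big_split /=; apply: le_trans (ler_norm_sum _ _ _) _.
apply: ler_sum => i _; rewrite normrM -(real_normK (num_real (tnth x i))).
rewrite -(real_normK (num_real (tnth y i))).
by have := sqr_ge0 (`|tnth x i| - `|tnth y i|); nra.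
Qed.

Definition sqdist b x := \sum_(i < n) (tnth x i - tnth b i) ^+ 2.

Lemma sqdist_ge0 b x : 0 <= sqdist b x.
Proof. by apply: sumr_ge0 => i _; exact: sqr_ge0. Qed.

Lemma sqdistE b x : sqdist b x = sqnorm x - 2 * dotv b x + sqnorm b.
Proof.
rewrite /sqdist /sqnorm /dotv mulr_sumr -sumrB -big_split.
by apply: eq_bigr => i _ /=; ring.
Qed.

(* [|t (x - b) - y|^2 >= 0], expanded. *)
Lemma dotv_sub_le_sqdist t b x y :
  2 * t * (dotv x y - dotv b y) <= t ^+ 2 * sqdist b x + sqnorm y.
Proof.
rewrite -subr_ge0 /sqdist /sqnorm /dotv -sumrB !mulr_sumr -big_split -sumrB /=.
apply: sumr_ge0 => i _.
by have := sqr_ge0 (t * (tnth x i - tnth b i) - tnth y i); nra.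
Qed.

Section affine.
Variables (l : R) (k x y : Rd).
Hypothesis y_affine : forall i, tnth y i = l * tnth x i + tnth k i.

Lemma dotv_affine z : dotv y z = l * dotv x z + dotv k z.
Proof.
rewrite /dotv mulr_sumr -big_split; apply: eq_bigr => i _ /=.
by rewrite y_affine mulrDl mulrA.
Qed.

Lemma sqnorm_affine :
  sqnorm y = l ^+ 2 * sqnorm x + 2 * l * dotv k x + sqnorm k.
Proof.
rewrite /sqnorm /dotv !mulr_sumr -!big_split; apply: eq_bigr => i _ /=.
by rewrite y_affine; ring.
Qed.

End affine.

Lemma measurable_tnth_fst i :
  measurable_fun setT (fun z : Rd * Rd => tnth z.1 i).
Proof. exact: measurableT_comp (measurable_tnth i) measurable_fst. Qed.

Lemma measurable_tnth_snd i :
  measurable_fun setT (fun z : Rd * Rd => tnth z.2 i).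
Proof. exact: measurableT_comp (measurable_tnth i) measurable_snd. Qed.

Lemma measurable_dotv k : measurable_fun setT (dotv k).
Proof.
apply: measurable_sum => i; apply: measurable_funM => //; exact: measurable_tnth.
Qed.

Lemma measurable_sqnorm : measurable_fun setT (@sqnorm R n).
Proof.
apply: measurable_sum => i; apply: measurable_funM; exact: measurable_tnth.
Qed.

Lemma measurable_sqdist b : measurable_fun setT (sqdist b).
Proof.
apply: measurable_sum => i; apply: measurable_funX.
by apply: measurable_funB => //; exact: measurable_tnth.
Qed.

Lemma measurable_dotv_pair :
  measurable_fun setT (fun z : Rd * Rd => dotv z.1 z.2).
Proof.
apply: measurable_sum => i.
by apply: measurable_funM; [exact: measurable_tnth_fst | exact: measurable_tnth_snd].
Qed.

End euclidean.

Section second_moment.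
Context {R : realType} {n : nat}.
Notation Rd := (n.-tuple R).
Implicit Types (mu : probability Rd R) (k : Rd).

Definition moment2 mu := \int[mu]_x sqnorm x.
Definition Rvariance mu := moment2 mu - sqnorm (mean mu).

Lemma tnth_mean mu i : tnth (mean mu) i = \int[mu]_x tnth x i.
Proof. exact: tnth_mktuple. Qed.

Lemma moment2_ge0 mu : 0 <= moment2 mu.
Proof. by apply: Rintegral_ge0 => x _; exact: sqnorm_ge0. Qed.

Variable mu : probability Rd R.
Hypothesis mu_P2 : P2 mu.

Lemma P2_integrable_sqnorm : Rintegrable mu sqnorm.
Proof. exact: ge0_Rintegrable measurable_sqnorm sqnorm_ge0 mu_P2. Qed.

Lemma moment2E : (\int[mu]_x (sqnorm x)%:E)%E = (moment2 mu)%:E.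
Proof. exact: RintegralE P2_integrable_sqnorm. Qed.

Lemma P2_integrable_tnth i : Rintegrable mu (fun x => tnth x i).
Proof.
apply: (le_Rintegrable (measurable_tnth i)) (RintegrableD
  (finite_measure_integrable_cst mu 1 measurableT) P2_integrable_sqnorm) => x.
have := sqr_tnth_le_sqnorm x i; rewrite -real_normK ?num_real //.
by have := normr_ge0 (tnth x i); rewrite /=; nra.
Qed.

Lemma P2_integrable_dotv k : Rintegrable mu (dotv k).
Proof.
by apply: Rintegrable_sum => i; apply: RintegrableZl; exact: P2_integrable_tnth.
Qed.

Lemma Rintegral_dotv k : \int[mu]_x dotv k x = dotv k (mean mu).
Proof.
rewrite Rintegral_sum => [|i]; last first.
  by apply: RintegrableZl; exact: P2_integrable_tnth.
apply: eq_bigr => i _.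
by rewrite RintegralZl ?tnth_mean //; exact: P2_integrable_tnth.
Qed.

Lemma Rintegrable_quadratic a b k c :
  Rintegrable mu (fun x => a * sqnorm x + b * dotv k x + c).
Proof.
apply: RintegrableD; last exact: finite_measure_integrable_cst.
by apply: RintegrableD; apply: RintegrableZl;
  [exact: P2_integrable_sqnorm | exact: P2_integrable_dotv].
Qed.

Lemma Rintegral_quadratic a b k c :
  \int[mu]_x (a * sqnorm x + b * dotv k x + c) =
  a * moment2 mu + b * dotv k (mean mu) + c.
Proof.
have int_a := RintegrableZl a P2_integrable_sqnorm.
have int_b := RintegrableZl b (P2_integrable_dotv k).
rewrite RintegralD //; [|exact: RintegrableD|exact: finite_measure_integrable_cst].
rewrite RintegralD // !RintegralZl ?Rintegral_dotv ?Rintegral_cst_probability //.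
- exact: P2_integrable_dotv.
- exact: P2_integrable_sqnorm.
Qed.

Let sqdist_quadratic (b : Rd) :
  sqdist b = fun x => 1 * sqnorm x + (-2) * dotv b x + sqnorm b.
Proof. by apply: funext => x; rewrite sqdistE mul1r mulNr. Qed.

Lemma Rintegrable_sqdist b : Rintegrable mu (sqdist b).
Proof. by rewrite sqdist_quadratic; exact: Rintegrable_quadratic. Qed.

Lemma Rintegral_sqdist b :
  \int[mu]_x sqdist b x = moment2 mu - 2 * dotv b (mean mu) + sqnorm b.
Proof. by rewrite sqdist_quadratic Rintegral_quadratic mul1r mulNr. Qed.

Lemma Rintegral_sqdist_mean : \int[mu]_x sqdist (mean mu) x = Rvariance mu.
Proof. by rewrite Rintegral_sqdist /Rvariance /sqnorm; ring. Qed.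

Lemma VarE : Var mu = (Rvariance mu)%:E.
Proof.
by rewrite -Rintegral_sqdist_mean -RintegralE //; exact: Rintegrable_sqdist.
Qed.

Lemma Rvariance_ge0 : 0 <= Rvariance mu.
Proof.
by rewrite -Rintegral_sqdist_mean; apply: Rintegral_ge0 => x _; exact: sqdist_ge0.
Qed.

Lemma Rvariance_le_moment2 : Rvariance mu <= moment2 mu.
Proof. by rewrite gerBl sqnorm_ge0. Qed.

End second_moment.

Section coupling_integrals.
Context {R : realType} {n : nat}.
Notation Rd := (n.-tuple R).
Variables (mu nu : probability Rd R) (pi : probability (Rd * Rd)%type R).
Hypothesis pi_coupling : coupling mu nu pi.

Definition Rcorr (p : probability (Rd * Rd)%type R) := \int[p]_z dotv z.1 z.2.

Lemma coupling_Rintegrable_fst g : measurable_fun setT g ->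
  Rintegrable mu g -> Rintegrable pi (fun z => g z.1).
Proof.
move=> mg; apply: (Rintegrable_transfer measurable_fst _ mg).1.
by move=> A mA; exact/esym/(pi_coupling.1 A mA).
Qed.

Lemma coupling_Rintegral_fst g : measurable_fun setT g ->
  Rintegrable mu g -> \int[pi]_z g z.1 = \int[mu]_x g x.
Proof.
move=> mg intg; apply/esym/Rintegral_transfer => //.
  by move=> A mA; exact/esym/(pi_coupling.1 A mA).
exact: coupling_Rintegrable_fst.
Qed.

Lemma coupling_Rintegrable_snd g : measurable_fun setT g ->
  Rintegrable nu g -> Rintegrable pi (fun z => g z.2).
Proof.
move=> mg; apply: (Rintegrable_transfer measurable_snd _ mg).1.
by move=> A mA; exact/esym/(pi_coupling.2 A mA).
Qed.

Lemma coupling_Rintegral_snd g : measurable_fun setT g ->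
  Rintegrable nu g -> \int[pi]_z g z.2 = \int[nu]_y g y.
Proof.
move=> mg intg; apply/esym/Rintegral_transfer => //.
  by move=> A mA; exact/esym/(pi_coupling.2 A mA).
exact: coupling_Rintegrable_snd.
Qed.

Hypotheses (mu_P2 : P2 mu) (nu_P2 : P2 nu).

Lemma coupling_integrable_dotv : Rintegrable pi (fun z => dotv z.1 z.2).
Proof.
apply: le_Rintegrable measurable_dotv_pair (fun z => normr_dotv_le z.1 z.2) _.
apply: RintegrableD.
- exact: coupling_Rintegrable_fst measurable_sqnorm (P2_integrable_sqnorm mu_P2).
- exact: coupling_Rintegrable_snd measurable_sqnorm (P2_integrable_sqnorm nu_P2).
Qed.

Lemma corrE : corr pi = (Rcorr pi)%:E.
Proof. exact: RintegralE coupling_integrable_dotv. Qed.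

Lemma Kdom_integralE : mean nu = [tuple 0 | _ < n] ->
  (\int[pi]_z (\sum_(i < n) (tnth z.1 i - tnth (mean nu) i)
                              * (tnth z.2 i - tnth z.1 i))%:E)%E =
  (Rcorr pi - moment2 mu)%:E.
Proof.
move=> nu_mean0.
have Kdom_integrand (z : Rd * Rd) :
    \sum_(i < n) (tnth z.1 i - tnth (mean nu) i) * (tnth z.2 i - tnth z.1 i) =
    dotv z.1 z.2 - sqnorm z.1.
  rewrite /sqnorm /dotv -sumrB; apply: eq_bigr => i _.
  by rewrite nu_mean0 tnth_mktuple subr0 mulrBr.
have int_sqnorm1 := coupling_Rintegrable_fst measurable_sqnorm
  (P2_integrable_sqnorm mu_P2).
have int_dotv := coupling_integrable_dotv.
under eq_integral do rewrite Kdom_integrand.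
rewrite RintegralE; last exact (RintegrableB int_dotv int_sqnorm1).
rewrite (@RintegralB _ _ _ pi setT (fun z => dotv z.1 z.2) (fun z => sqnorm z.1)) //.
by rewrite (coupling_Rintegral_fst measurable_sqnorm (P2_integrable_sqnorm mu_P2)).
Qed.

Lemma Rcorr_Rvariance0 : Rvariance mu = 0 -> Rcorr pi = dotv (mean mu) (mean nu).
Proof.
move=> var0; set b := mean mu.
have int_sqdist1 := coupling_Rintegrable_fst (measurable_sqdist b)
  (Rintegrable_sqdist mu_P2 b).
have int_sqnorm2 := coupling_Rintegrable_snd measurable_sqnorm
  (P2_integrable_sqnorm nu_P2).
have int_dotv2 := coupling_Rintegrable_snd (measurable_dotv b)
  (P2_integrable_dotv nu_P2 b).
have int_dotv := coupling_integrable_dotv.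
(* Integrating [dotv_sub_le_sqdist] against [pi] gives
   [2 t (Rcorr pi - <b, mean nu>) <= t^2 Rvariance mu + moment2 nu]. *)
have bound t : t * (2 * (Rcorr pi - dotv b (mean nu))) <= moment2 nu.
  have := le_Rintegral measurableT
    (RintegrableZl (2 * t) (RintegrableB int_dotv int_dotv2))
    (RintegrableD (RintegrableZl (t ^+ 2) int_sqdist1) int_sqnorm2)
    (fun z _ => dotv_sub_le_sqdist t b z.1 z.2).
  rewrite RintegralZl //; last exact (RintegrableB int_dotv int_dotv2).
  rewrite (@RintegralB _ _ _ pi setT (fun z => dotv z.1 z.2)
    (fun z => dotv b z.2)) //.
  rewrite (@RintegralD _ _ _ pi setT (fun z => t ^+ 2 * sqdist b z.1)
    (fun z => sqnorm z.2)) //; last exact (RintegrableZl _ int_sqdist1).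
  rewrite RintegralZl //.
  rewrite (coupling_Rintegral_fst (measurable_sqdist b) (Rintegrable_sqdist mu_P2 b)).
  rewrite (coupling_Rintegral_snd (measurable_dotv b) (P2_integrable_dotv nu_P2 b)).
  rewrite (coupling_Rintegral_snd measurable_sqnorm (P2_integrable_sqnorm nu_P2)).
  by rewrite Rintegral_sqdist_mean // Rintegral_dotv // var0 mulr0 add0r mulrCA mulrA.
move/bounded_linear_eq0/eqP: bound.
by rewrite mulf_eq0 pnatr_eq0 subr_eq0 => /eqP.
Qed.

End coupling_integrals.

Lemma KdomP {R : realType} {n : nat} (mu nu : probability (n.-tuple R) R) :
  P2 mu -> P2 nu -> mean nu = [tuple 0 | _ < n] ->
  Kdom mu nu <-> exists pi, coupling mu nu pi /\ Rcorr pi = moment2 mu.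
Proof.
move=> mu_P2 nu_P2 nu_mean0; split => -[pi [pi_coupling pi_eq]]; exists pi.
  split => //; apply/eqP; rewrite -subr_eq0 -eqe.
  by rewrite -(Kdom_integralE pi_coupling) // pi_eq.
by split => //; rewrite (Kdom_integralE pi_coupling) // pi_eq subrr.
Qed.

Section map_fst.
Context d1 d2 d3 (T1 : measurableType d1) (T2 : measurableType d2)
  (T3 : measurableType d3).

Definition map_fst (f : T1 -> T2) (z : T1 * T3) : T2 * T3 := (f z.1, z.2).

Lemma measurable_map_fst (f : {mfun T1 >-> T2}) :
  measurable_fun setT (map_fst f).
Proof.
apply: measurable_fun_pair => //.
exact: measurableT_comp (measurable_funPT f) measurable_fst.
Qed.

HB.instance Definition _ (f : {mfun T1 >-> T2}) :=
  isMeasurableFun.Build _ _ _ _ (map_fst f) (measurable_map_fst f).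

End map_fst.

Section affine_maps.
Context {R : realType} {n : nat}.
Notation Rd := (n.-tuple R).

Lemma measurable_dilate (l : R) : measurable_fun setT (@dilate R n l).
Proof.
apply/measurable_fun_tnthP => i.
rewrite (_ : _ \o _ = fun x => l * tnth x i); last first.
  by apply: funext => x /=; rewrite tnth_mktuple.
by apply: measurable_funM => //; exact: measurable_tnth.
Qed.

Lemma measurable_translate (k : Rd) : measurable_fun setT (@translate R n k).
Proof.
apply/measurable_fun_tnthP => i.
rewrite (_ : _ \o _ = fun x => tnth x i + tnth k i); last first.
  by apply: funext => x /=; rewrite tnth_mktuple.
by apply: measurable_funD => //; exact: measurable_tnth.
Qed.

HB.instance Definition _ (l : R) :=
  isMeasurableFun.Build _ _ _ _ (@dilate R n l) (measurable_dilate l).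
HB.instance Definition _ (k : Rd) :=
  isMeasurableFun.Build _ _ _ _ (@translate R n k) (measurable_translate k).

End affine_maps.

Lemma coupling_map_fst {R : realType} {n : nat}
    (mu nu : probability (n.-tuple R) R)
    (pi : probability (n.-tuple R * n.-tuple R)%type R)
    (f : {mfun n.-tuple R >-> n.-tuple R}) :
  coupling mu nu pi ->
  coupling (distribution mu f) nu (distribution pi (map_fst f)).
Proof.
move=> pi_coupling; split => A mA.
  exact: pi_coupling.1 (f @^-1` A) (measurable_funPTI f mA).
exact: pi_coupling.2 A mA.
Qed.

Section affine_pushforward.
Context {R : realType} {n : nat}.
Notation Rd := (n.-tuple R).
Variable mu : probability Rd R.
Hypothesis mu_P2 : P2 mu.
Variables (f : {mfun Rd >-> Rd}) (l : R) (k : Rd).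
Hypothesis f_affine : forall x i, tnth (f x) i = l * tnth x i + tnth k i.
Local Notation fmu := (distribution mu f).

Let fmuE A : measurable A -> fmu A = mu (f @^-1` A). Proof. by []. Qed.

Let integrable_sqnorm_f : Rintegrable mu (sqnorm \o f).
Proof.
rewrite (_ : _ \o _ = fun x => l ^+ 2 * sqnorm x + (2 * l) * dotv k x + sqnorm k).
  exact: Rintegrable_quadratic.
by apply: funext => x; rewrite /= (sqnorm_affine (f_affine x)).
Qed.

Lemma tnth_mean_affine i : tnth (mean fmu) i = l * tnth (mean mu) i + tnth k i.
Proof.
have f_i : (fun x => tnth x i) \o f = fun x => l * tnth x i + tnth k i.
  by apply: funext => x; rewrite /= f_affine.
have int_f_i : Rintegrable mu ((fun x => tnth x i) \o f).
  rewrite f_i; apply: RintegrableD; last exact: finite_measure_integrable_cst.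
  by apply: RintegrableZl; exact: P2_integrable_tnth.
rewrite !tnth_mean.
rewrite (Rintegral_transfer (measurable_funPT f) fmuE (measurable_tnth i) int_f_i).
under eq_Rintegral do rewrite f_affine.
rewrite RintegralD ?RintegralZl ?Rintegral_cst_probability //.
- exact: P2_integrable_tnth.
- by apply: RintegrableZl; exact: P2_integrable_tnth.
- exact: finite_measure_integrable_cst.
Qed.

Lemma P2_affine : P2 fmu.
Proof.
suff : Rintegrable fmu sqnorm by exact: integrable_lty.
exact/(Rintegrable_transfer (measurable_funPT f) fmuE measurable_sqnorm).
Qed.

Lemma moment2_affine :
  moment2 fmu = l ^+ 2 * moment2 mu + 2 * l * dotv k (mean mu) + sqnorm k.
Proof.
rewrite /moment2.
rewrite (Rintegral_transfer (measurable_funPT f) fmuE measurable_sqnorm) //.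
under eq_Rintegral do rewrite (sqnorm_affine (f_affine _)).
exact: Rintegral_quadratic.
Qed.

Lemma Rvariance_affine : Rvariance fmu = l ^+ 2 * Rvariance mu.
Proof.
rewrite /Rvariance moment2_affine (sqnorm_affine tnth_mean_affine) /sqnorm; ring.
Qed.

Section affine_coupling.
Variables (nu : probability Rd R) (pi : probability (Rd * Rd)%type R).
Hypotheses (pi_coupling : coupling mu nu pi) (nu_P2 : P2 nu).
Hypothesis nu_mean0 : mean nu = [tuple 0 | _ < n].

Lemma Rcorr_map_fst : Rcorr (distribution pi (map_fst f)) = l * Rcorr pi.
Proof.
have dotv_f : (fun z : Rd * Rd => dotv z.1 z.2) \o map_fst f =
    fun z => l * dotv z.1 z.2 + dotv k z.2.
  by apply: funext => z; rewrite /= (dotv_affine (f_affine z.1)).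
have int_dotv := coupling_integrable_dotv pi_coupling mu_P2 nu_P2.
have int_dotv2 := coupling_Rintegrable_snd pi_coupling (measurable_dotv k)
  (P2_integrable_dotv nu_P2 k).
have int_dotv_f : Rintegrable pi ((fun z : Rd * Rd => dotv z.1 z.2) \o map_fst f).
  by rewrite dotv_f; apply: RintegrableD => //; exact: RintegrableZl.
rewrite /Rcorr (Rintegral_transfer (measurable_funPT (map_fst f)) _
  measurable_dotv_pair int_dotv_f) //.
under eq_Rintegral do rewrite /= (dotv_affine (f_affine _)).
rewrite RintegralD //; last exact: RintegrableZl.
rewrite RintegralZl // (coupling_Rintegral_snd pi_coupling (measurable_dotv k)
  (P2_integrable_dotv nu_P2 k)).
by rewrite Rintegral_dotv // nu_mean0 dotv0r addr0.
Qed.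

End affine_coupling.
End affine_pushforward.

Section variance_maximizer.
Context {R : realType} {n : nat}.
Notation Rd := (n.-tuple R).
Variables (D : set (probability Rd R)) (nu : probability Rd R).
Hypotheses (D_P2 : forall mu, D mu -> P2 mu) (D_cone : is_cone D).
Hypotheses (nu_P2 : P2 nu) (nu_mean0 : mean nu = [tuple 0 | _ < n]).

Lemma dilation_in_MK mu pi l : D mu -> coupling mu nu pi -> 0 <= l ->
  Rcorr pi = l * moment2 mu ->
  exists mu', [/\ D mu', MK nu mu' & Rvariance mu' = l ^+ 2 * Rvariance mu].
Proof.
move=> Dmu pi_coupling l_ge0 corr_pi; have mu_P2 := D_P2 Dmu.
pose f : {mfun Rd >-> Rd} := [mfun of @dilate R n l].
have f_affine x i : tnth (f x) i = l * tnth x i + tnth [tuple (0 : R) | _ < n] i.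
  by rewrite !tnth_mktuple addr0.
exists (distribution mu f); split.
- by apply: D_cone Dmu l_ge0 _ => A mA.
- split; first exact: P2_affine f_affine.
  apply/(KdomP (P2_affine mu_P2 f_affine) nu_P2 nu_mean0).
  exists (distribution pi (map_fst f)); split.
    exact: coupling_map_fst.
  rewrite (Rcorr_map_fst mu_P2 f_affine pi_coupling) // corr_pi.
  by rewrite (moment2_affine mu_P2 f_affine) /sqnorm !dotv0l; ring.
- exact: Rvariance_affine.
Qed.

Lemma Rcorr_le_moment2 mu pi : D mu -> coupling mu nu pi ->
  (forall mu', D mu' -> MK nu mu' -> (Var mu' <= Var mu)%E) ->
  Rcorr pi <= moment2 mu.
Proof.
move=> Dmu pi_coupling mu_max; have mu_P2 := D_P2 Dmu.
rewrite leNgt; apply/negP => lt_m_corr.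
suff var0 : Rvariance mu = 0.
  move: lt_m_corr; rewrite (Rcorr_Rvariance0 pi_coupling) // nu_mean0 dotv0r.
  by rewrite ltNge moment2_ge0.
have var_ge0 := Rvariance_ge0 mu_P2.
have [m0|m_neq0] := eqVneq (moment2 mu) 0.
  by apply/eqP; rewrite eq_le var_ge0 andbT -m0 Rvariance_le_moment2.
have m_gt0 : 0 < moment2 mu by rewrite lt0r m_neq0 moment2_ge0.
pose l := Rcorr pi / moment2 mu.
have l_gt1 : 1 < l by rewrite ltr_pdivlMr // mul1r.
have [mu' [Dmu' MKmu' var_mu']] := dilation_in_MK Dmu pi_coupling
  (ltW (lt_trans ltr01 l_gt1)) (esym (divfK m_neq0 _)).
have := mu_max _ Dmu' MKmu'.
rewrite (VarE MKmu'.1) (VarE mu_P2) var_mu' lee_fin => le_var.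
have l2_gt1 : 1 < l ^+ 2 by rewrite expr2; nra.
by apply/eqP; rewrite eq_le var_ge0 andbT; nra.
Qed.

Lemma mean_eq0_of_Var_max mu : transl_inv D -> D mu -> MK nu mu ->
  (forall mu', D mu' -> MK nu mu' -> (Var mu' <= Var mu)%E) ->
  mean mu = [tuple 0 | _ < n].
Proof.
move=> D_transl Dmu [mu_P2 mu_Kdom] mu_max.
have [pi [pi_coupling corr_pi]] := (KdomP mu_P2 nu_P2 nu_mean0).1 mu_Kdom.
pose k := [tuple - tnth (mean mu) i | i < n].
pose f : {mfun Rd >-> Rd} := [mfun of @translate R n k].
have f_affine x i : tnth (f x) i = 1 * tnth x i + tnth k i.
  by rewrite tnth_mktuple mul1r.
have Dfmu : D (distribution mu f) by apply: D_transl Dmu _ => A mA.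
have Var_fmu : Var (distribution mu f) = Var mu.
  rewrite (VarE (P2_affine mu_P2 f_affine)) (VarE mu_P2).
  by rewrite (Rvariance_affine mu_P2 f_affine) expr1n mul1r.
have := Rcorr_le_moment2 Dfmu (coupling_map_fst f pi_coupling).
rewrite Var_fmu => /(_ mu_max).
rewrite (Rcorr_map_fst mu_P2 f_affine pi_coupling) // corr_pi.
rewrite (moment2_affine mu_P2 f_affine).
have dotv_k : dotv k (mean mu) = - sqnorm (mean mu).
  by rewrite /dotv /sqnorm -sumrN; apply: eq_bigr => i _; rewrite tnth_mktuple mulNr.
have sqnorm_k : sqnorm k = sqnorm (mean mu).
  by apply: eq_bigr => i _; rewrite tnth_mktuple mulrNN.
rewrite dotv_k sqnorm_k expr1n !mul1r => le_m.
by apply: sqnorm_eq0; apply/eqP; rewrite eq_le sqnorm_ge0 andbT; lra.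
Qed.

End variance_maximizer.

Theorem mainTheorem13 (R : realType) (n : nat)
    (nu : probability (n.-tuple R) R)
    (D : set (probability (n.-tuple R) R)) :
  P2 nu -> mean nu = [tuple (0 : R) | _ < n] ->
  (forall mu, D mu -> P2 mu) -> is_cone D ->
  forall mus : probability (n.-tuple R) R,
    D mus -> MK nu mus ->
    (forall mu, D mu -> MK nu mu -> (Var mu <= Var mus)%E) ->
    (forall pis : probability (n.-tuple R * n.-tuple R)%type R,
       coupling mus nu pis ->
       (forall pi, coupling mus nu pi -> (corr pi <= corr pis)%E) ->
       corr pis = (\int[mus]_x (sqnorm x)%:E)%E) /\
    (transl_inv D -> mean mus = [tuple (0 : R) | _ < n]).
Proof.
move=> nu_P2 nu_mean0 D_P2 D_cone mus Dmus mus_MK mus_max; split; last first.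
  by move=> D_transl; exact: (mean_eq0_of_Var_max D_P2 D_cone nu_P2 nu_mean0).
move=> pis pis_coupling pis_max; have [mus_P2 mus_Kdom] := mus_MK.
have [piK [piK_coupling corr_piK]] := (KdomP mus_P2 nu_P2 nu_mean0).1 mus_Kdom.
rewrite (corrE pis_coupling mus_P2 nu_P2) (moment2E mus_P2); congr EFin.
have := Rcorr_le_moment2 D_P2 D_cone nu_P2 nu_mean0 Dmus pis_coupling mus_max.
move=> le_corr; apply/eqP; rewrite eq_le le_corr -corr_piK -lee_fin.
by rewrite -(corrE piK_coupling) // -(corrE pis_coupling) // pis_max.
Qed.
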